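(* Let $\lambda \in \mathbb{C}\setminus\{0\}$ and $\ast \in \{p,m\}$. The two eigenvalues (counted with multiplicity) of the transfer matrix $T_\ast = T_\ast(\lambda)$ have equal modulus if and only if \[ \lambda + \lambda^{-1} \in \mathbb{R} \quad\text{and}\quad \bigl(\lambda + \lambda^{-1} - 2 p a_\ast \cosh(2\gamma)\bigr)^2 - 4|b_\ast q|^2 \le 0 . \] Consequently, $\lambda \notin \Lambda$ if and only if these two conditions hold for at least one $\ast \in \{p,m\}$.
   Context: Fix $\gamma \in \mathbb{R}$, $p \in (-1,1)$, $q \in \mathbb{C}$ with $p^2 + |q|^2 = 1$, and for $\ast \in \{p,m\}$ fix $a_\ast \in (-1,1)$, $b_\ast \in \mathbb{C}$ with $a_\ast^2 + |b_\ast|^2 = 1$ (so $q \neq 0$, $b_\ast \neq 0$). For $\lambda \in \mathbb{C}\setminus\{0\}$ and $\ast \in \{p,m\}$ define the $2\times 2$ transfer matrix \[ T_\ast = \frac{1}{b_\ast q \lambda}\begin{pmatrix} \lambda^2 - 2 a_\ast p \cosh(2\gamma)\lambda + a_\ast^2 & -\overline{b_\ast}\,(p\lambda - a_\ast e^{2\gamma}) \\ -b_\ast\,(p\lambda - a_\ast e^{-2\gamma}) & |b_\ast|^2 \end{pmatrix}. \] Define $\Lambda$ to be the set of $\lambda \in \mathbb{C}\setminus\{0\}$ such that, for each $\ast \in \{p,m\}$, the two eigenvalues of $T_\ast$ have distinct moduli. *)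

From HB Require Import structures.
From mathcomp Require Import all_boot all_order all_algebra.
From mathcomp Require Import reals sequences exp.
From mathcomp Require Import complex.
Set Implicit Arguments. Unset Strict Implicit. Unset Printing Implicit Defensive.
Import Order.TTheory GRing.Theory Num.Theory.
Local Open Scope ring_scope.
Local Open Scope complex_scope.

Definition coshR {R : realType} (x : R) : R := (expR x + expR (- x)) / 2.

Definition transfer {R : realType} (gamma p : R) (q : complex R) (a : R) (b : complex R)
    (lam : complex R) : 'M[complex R]_2 :=
  (b * q * lam)^-1 *:
  \matrix_(i < 2, j < 2)
     match (val i), (val j) with
     | O, O => lam ^+ 2 - 2%:R * (a * p * coshR (2%:R * gamma))%:C * lam + (a ^+ 2)%:C
     | O, _ => - (b^*) * (p%:C * lam - (a * expR (2%:R * gamma))%:C)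
     | _, O => - b * (p%:C * lam - (a * expR (- (2%:R * gamma)))%:C)
     | _, _ => (`|b| ^+ 2)
     end.

Definition eig_equal_modulus {C : numClosedFieldType} (A : 'M[C]_2) : Prop :=
  exists mu1 mu2 : C,
    char_poly A = ('X - mu1%:P) * ('X - mu2%:P) /\ `|mu1| = `|mu2|.

Inductive star := Sp | Sm.

From HB Require Import structures.
From mathcomp Require Import all_boot all_order all_algebra.
From mathcomp Require Import reals sequences exp.
From mathcomp Require Import complex.
From mathcomp Require Import boolp ring lra.
Set Implicit Arguments. Unset Strict Implicit. Unset Printing Implicit Defensive.
Import Order.TTheory GRing.Theory Num.Theory.
Local Open Scope ring_scope.

(* Put u = b q and y = lam + lam^-1 - 2 p a cosh(2 gamma).  Because
   a^2 + |b|^2 = p^2 + |q|^2 = 1, the matrix T has trace y / u and determinant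
   w^2 with w = |u| / u on the unit circle.  Its eigenvalues are therefore
   w v and w / v with v + 1/v = y / |u|, and they have equal modulus iff
   |v| = 1, i.e. iff y / |u| = v + conj v is a real number in [-2, 2]. *)

Lemma det_mx2 (C : comNzRingType) (A : 'M[C]_2) :
  \det A = A 0 0 * A 1 1 - A 0 1 * A 1 0.
Proof.
rewrite (expand_det_row _ 0) !big_ord_recl big_ord0 addr0 /cofactor !det_mx11.
rewrite !mxE /= expr0 expr1 mul1r mulN1r mulrN.
by congr (A _ _ * A _ _ - A _ _ * A _ _); apply/val_inj.
Qed.

Lemma mxtrace_mx2 (C : comNzRingType) (A : 'M[C]_2) : \tr A = A 0 0 + A 1 1.
Proof.
by rewrite /mxtrace !big_ord_recl big_ord0 addr0; congr (A _ _ + A _ _); apply/val_inj.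
Qed.

Lemma char_poly_mx2 (C : comNzRingType) (A : 'M[C]_2) :
  char_poly A = 'X^2 - (\tr A)%:P * 'X + (\det A)%:P.
Proof.
rewrite /char_poly det_mx2 mxtrace_mx2 det_mx2 !mxE /=.
rewrite polyCD polyCB !polyCM; ring.
Qed.

Lemma mulXsubC (C : comNzRingType) (x y : C) :
  ('X - x%:P) * ('X - y%:P) = 'X^2 - (x + y)%:P * 'X + (x * y)%:P :> {poly C}.
Proof. rewrite polyCD polyCM; ring. Qed.

Lemma monic_quad_inj (C : comNzRingType) (s t s' t' : C) :
  'X^2 - s%:P * 'X + t%:P = 'X^2 - s'%:P * 'X + t'%:P :> {poly C} ->
  s = s' /\ t = t'.
Proof.
move=> E; have E0 := congr1 (coefp 0) E; have E1 := congr1 (coefp 1) E.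
move: E0 E1; rewrite /= !coefD !coefN !coefXn !coefC !coefMX !coefC /=.
by rewrite !subrr !add0r !addr0 => -> /oppr_inj ->.
Qed.

Section EqualModulusRoots.
Variable C : numClosedFieldType.
Implicit Types v s : C.

Lemma norm1_invC v : `|v| = 1 -> v^-1 = v^*.
Proof. by move=> v1; rewrite invC_norm v1 expr1n invr1 mul1r. Qed.

Lemma real_sqr_le4P s :
  (s \is Num.real /\ s ^+ 2 <= 4%:R) <-> exists2 v, `|v| = 1 & s = v + v^-1.
Proof.
split=> [[sR s2le4] | [v v1 ->]].
- set r := sqrtC (4%:R - s ^+ 2).
  have rJ : r^* = r by apply/eqP; rewrite -CrealE ger0_real // sqrtC_ge0 subr_ge0.
  have sJ : s^* = s by apply/eqP; rewrite -CrealE.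
  set v := (s + 'i * r) / 2%:R.
  have vconj : v^* = (s - 'i * r) / 2%:R.
    by rewrite rmorphM rmorphD rmorphM /= fmorphV /= conjCi rJ sJ rmorph_nat mulNr.
  have v1 : `|v| = 1.
    apply/eqP; rewrite -(@pexpr_eq1 _ _ 2) // normCK vconj.
    have -> : (s + 'i * r) / 2%:R * ((s - 'i * r) / 2%:R) =
              (s ^+ 2 - 'i ^+ 2 * r ^+ 2) / 4%:R by field.
    by rewrite sqrCi sqrtCK mulN1r opprK addrC subrK divff // pnatr_eq0.
  by exists v; rewrite // norm1_invC // vconj /v; field.
- rewrite norm1_invC //.
  have sR : v + v^* \is Num.real by rewrite CrealE rmorphD /= conjCK addrC.
  split=> //; rewrite -real_normK // (_ : 4%:R = 2%:R ^+ 2); last first.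
    by rewrite expr2 -natrM.
  rewrite lerXn2r ?nnegrE ?ler0n //.
  by rewrite (le_trans (ler_normD _ _)) // norm_conjC v1.
Qed.

Definition equal_modulus_roots (P : {poly C}) : Prop :=
  exists mu1 mu2 : C, P = ('X - mu1%:P) * ('X - mu2%:P) /\ `|mu1| = `|mu2|.

Lemma equal_modulus_roots_quadP (w s : C) : w != 0 ->
  equal_modulus_roots ('X^2 - (w * s)%:P * 'X + (w ^+ 2)%:P) <->
  exists2 v, `|v| = 1 & s = v + v^-1.
Proof.
move=> w0; split=> [[m1 [m2 [E m12]]] | [v v1 ->]].
- move: E; rewrite mulXsubC => /monic_quad_inj [sum prod].
  have m1w : `|m1| = `|w|.
    apply/eqP; rewrite -(@eqrXn2 _ 2) ?normr_ge0 // expr2 {2}m12 -normrM.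
    by rewrite -prod normrX.
  have m10 : m1 != 0 by rewrite -normr_eq0 m1w normr_eq0.
  exists (m1 / w); first by rewrite normrM normfV m1w divff ?normr_eq0.
  apply: (mulfI w0); rewrite sum (_ : m2 = w ^+ 2 / m1); last first.
    by rewrite prod mulrAC divff ?mul1r.
  by field; rewrite m10 w0.
- have v0 : v != 0 by rewrite -normr_eq0 v1 oner_eq0.
  exists (w * v), (w / v); rewrite mulXsubC; split.
    by congr ('X^2 - _%:P * 'X + _%:P); field.
  by rewrite !normrM normfV v1 invr1.
Qed.

Lemma real_div_sqr_le4 (y N : C) : 0 < N ->
  (y / N \is Num.real /\ (y / N) ^+ 2 <= 4%:R) <->
  (y \is Num.real /\ y ^+ 2 - 4%:R * N ^+ 2 <= 0).
Proof.
move=> N0; have NR : N \is Num.real by rewrite gtr0_real.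
have N2 : 0 < N ^+ 2 by rewrite exprn_gt0.
rewrite rpred_divr ?unitfE ?gt_eqF // expr_div_n ler_pdivrMr // subr_le0.
by rewrite mulrC.
Qed.

End EqualModulusRoots.

Local Open Scope complex_scope.

Lemma coshR_complex (R : realType) (x : R) :
  (coshR x)%:C = ((expR x)%:C + ((expR x)%:C)^-1) / 2%:R.
Proof. by rewrite /coshR rmorphM rmorphD fmorphV /= expRN fmorphV rmorph_nat. Qed.

Section TransferMatrix.
Variables (R : realType) (gamma p : R) (q : complex R) (a : R) (b : complex R).
Variable lam : complex R.
Hypotheses (hab : (a ^+ 2)%:C + `|b| ^+ 2 = 1) (b0 : b != 0) (q0 : q != 0).
Hypothesis lam0 : lam != 0.

Let E := (expR (2%:R * gamma))%:C.
Let E0 : E != 0. Proof. by rewrite fmorph_eq0 gt_eqF ?expR_gt0. Qed.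
Let expRNE : (expR (- (2%:R * gamma)))%:C = E^-1. Proof. by rewrite expRN fmorphV. Qed.

Lemma mxtrace_transfer :
  \tr (transfer gamma p q a b lam) =
  (lam + lam^-1 - 2%:R * (p * a * coshR (2%:R * gamma))%:C) / (b * q).
Proof.
have normb2 : `|b| ^+ 2 = 1 - (a ^+ 2)%:C by rewrite -hab addrC addKr.
rewrite mxtrace_mx2 /transfer !mxE !(rmorphM _ _ (coshR _)) /= coshR_complex.
rewrite -/E !rmorphM /= normb2.
by field; rewrite lam0 b0 q0 E0.
Qed.

Lemma det_transfer (hpq : (p ^+ 2)%:C + `|q| ^+ 2 = 1) :
  \det (transfer gamma p q a b lam) = (`|b * q| / (b * q)) ^+ 2.
Proof.
have normq2 : `|q| ^+ 2 = 1 - (p ^+ 2)%:C by rewrite -hpq addrC addKr.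
have conjb : (b^*)%R = `|b| ^+ 2 / b by rewrite normCK mulrAC divff ?mul1r.
rewrite det_mx2 /transfer !mxE !(rmorphM _ _ (coshR _)) /= coshR_complex.
rewrite !rmorphM /= expRNE -/E conjb.
rewrite expr_div_n normrM exprMn normq2 !rmorphXn.
by field; rewrite lam0 b0 q0 E0.
Qed.

End TransferMatrix.

Lemma unit_sphere_neq0 (R : realType) (x : R) (z : complex R) :
  -1 < x < 1 -> (x ^+ 2)%:C + `|z| ^+ 2 = 1 -> z != 0.
Proof.
move=> /andP[x_gtN1 x_lt1] hxz; apply/eqP => z0; move: hxz.
by rewrite z0 normr0 expr0n addr0 -(rmorph1 (real_complex R)) => /fmorph_inj; nra.
Qed.

Lemma eig_equal_modulus_transfer (R : realType) (gamma p : R) (q : complex R)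
    (a : R) (b : complex R) (hp : -1 < p < 1) (hpq : (p ^+ 2)%:C + `|q| ^+ 2 = 1)
    (ha : -1 < a < 1) (hab : (a ^+ 2)%:C + `|b| ^+ 2 = 1)
    (lam : complex R) (lam0 : lam != 0) :
  eig_equal_modulus (transfer gamma p q a b lam) <->
  (lam + lam^-1) \is Num.real /\
  (lam + lam^-1 - 2%:R * (p * a * coshR (2%:R * gamma))%:C) ^+ 2
    - 4%:R * `|b * q| ^+ 2 <= 0.
Proof.
have q0 := unit_sphere_neq0 hp hpq; have b0 := unit_sphere_neq0 ha hab.
set K := (p * a * coshR _)%:C; set y := lam + lam^-1 - _.
have bq0 : b * q != 0 by rewrite mulf_neq0.
have N0 : 0 < `|b * q| by rewrite normr_gt0.
have w0 : `|b * q| / (b * q) != 0 by rewrite mulf_neq0 ?invr_eq0 ?normr_eq0.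
have KR : K \is Num.real by rewrite /K complex_real.
rewrite /eig_equal_modulus char_poly_mx2 mxtrace_transfer // det_transfer //.
rewrite -/y (_ : y / (b * q) = `|b * q| / (b * q) * (y / `|b * q|)); last first.
  by rewrite [RHS]mulrC mulrA divfK ?normr_eq0.
apply: (iff_trans (equal_modulus_roots_quadP _ w0)).
apply: (iff_trans (iff_sym (real_sqr_le4P _))).
by rewrite real_div_sqr_le4 // /y rpredBr // rpredM // rpred_nat.
Qed.

Unset Implicit Arguments.

Theorem lemma2p1 (R : realType) (gamma p : R) (q : complex R)
    (ap am : R) (bp bm : complex R)
    (hp : -1 < p < 1) (hpq : (p ^+ 2)%:C + `|q| ^+ 2 = 1)
    (hap : -1 < ap < 1) (hbp : (ap ^+ 2)%:C + `|bp| ^+ 2 = 1)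
    (ham : -1 < am < 1) (hbm : (am ^+ 2)%:C + `|bm| ^+ 2 = 1) :
  let a := fun s : star => match s with Sp => ap | Sm => am end in
  let b := fun s : star => match s with Sp => bp | Sm => bm end in
  let T := fun (s : star) (lam : complex R) => transfer gamma p q (a s) (b s) lam in
  let cond := fun (s : star) (lam : complex R) =>
    (lam + lam^-1) \is Num.real /\
    (lam + lam^-1 - 2%:R * (p * a s * coshR (2%:R * gamma))%:C) ^+ 2
      - 4%:R * `|b s * q| ^+ 2 <= 0 in
  let Lambda := fun lam : complex R =>
    lam != 0 /\ (forall s : star, ~ eig_equal_modulus (T s lam)) in
  (forall (lam : complex R) (s : star), lam != 0 ->
     (eig_equal_modulus (T s lam) <-> cond s lam)) /\
  (forall lam : complex R, lam != 0 ->
     (~ Lambda lam <-> exists s : star, cond s lam)).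
Proof.
move=> a b T cond Lambda.
have eqmodP lam s : lam != 0 -> eig_equal_modulus (T s lam) <-> cond s lam.
  by rewrite /T /cond /a /b; case: s; apply: eig_equal_modulus_transfer.
split=> // lam lam0; split=> [notLambda | [s conds] [_ noeqmod]].
- apply: contrapT => nocond; apply: notLambda.
  split=> // s /(eqmodP _ _ lam0) conds.
  by apply: nocond; exists s.
- exact/(noeqmod s)/(eqmodP _ _ lam0).
Qed.
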